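(* Let $f:[0,+\infty)\to[0,1]$ be defined by $f(u\tanh u)=u^{-1}\tanh u$ for $u>0$ and $f(0)=1$. Then for every fixed $\alpha>0$ the function $\phi(t)=t\,\alpha\, f(t/\alpha)$, $t>0$, is differentiable and monotone increasing, and $\phi(t)\to\alpha^2$ as $t\to+\infty$. *)

From Stdlib Require Import Reals.
From Coquelicot Require Import Coquelicot.
Open Scope R_scope.

(* [is_f f] : f is the function of the paper, f(u tanh u) = tanh u / u for
   u > 0 and f(0) = 1.  (Stdlib's [tanh x = sinh x / cosh x].)  Since
   u |-> u tanh u is a bijection of (0,+oo), this determines f on [0,+oo). *)
Definition is_f (f : R -> R) : Prop :=
  f 0 = 1 /\ (forall u : R, 0 < u -> f (u * tanh u) = tanh u / u).

Definition phi (f : R -> R) (alpha : R) (t : R) : R := t * alpha * f (t / alpha).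

From Stdlib Require Import Reals Lra ClassicalEpsilon Ranalysis5.
From Coquelicot Require Import Coquelicot.
Open Scope R_scope.

(* If [u >= 0] is the solution of [u tanh u = t / alpha], the defining
   relation of [f] gives [phi(t) = alpha^2 tanh^2 u].  The map
   [u |-> u tanh u] is a smooth increasing bijection of [[0,+oo)] with
   positive derivative on [(0,+oo)], so [u] depends increasingly and
   differentiably on [t], and [u >= t / alpha] tends to [+oo]; hence [phi]
   increases to [alpha^2] since [tanh] does to [1]. *)

Section IncreasingInverse.

Variable g : R -> R.
Hypothesis g_0 : g 0 = 0.
Hypothesis g_increasing : forall x y, 0 <= x -> x < y -> g x < g y.
Hypothesis g_continuous : continuity g.
Hypothesis g_unbounded : forall y, exists u, 0 <= u /\ y <= g u.

Lemma g_surjective y : 0 <= y -> exists u, 0 <= u /\ g u = y.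
Proof.
  intros Hy. destruct (g_unbounded y) as [b [Hb Hyb]].
  assert (Hc : continuity (fun u => g u - y)).
  { intros x. apply continuity_pt_minus; [apply g_continuous |].
    apply continuity_pt_const. now intros ? ?. }
  destruct (IVT_cor _ 0 b Hc Hb) as [u [Hu Hgu]]; [rewrite g_0; nra |].
  exists u. split; lra.
Qed.

Lemma g_nondecreasing x y : 0 <= x -> x <= y -> g x <= g y.
Proof.
  intros Hx Hxy. destruct (Req_dec x y) as [-> | Hne]; [lra |].
  apply Rlt_le, g_increasing; lra.
Qed.

(* Unspecified for [y < 0]. *)
Definition inverse_nonneg (y : R) : R :=
  epsilon (inhabits 0) (fun u => 0 <= u /\ g u = y).

Lemma inverse_nonneg_spec y : 0 <= y -> 0 <= inverse_nonneg y /\ g (inverse_nonneg y) = y.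
Proof. intros Hy. unfold inverse_nonneg. apply epsilon_spec, g_surjective, Hy. Qed.

Lemma inverse_nonneg_le x y : 0 <= x -> x <= y -> inverse_nonneg x <= inverse_nonneg y.
Proof.
  intros Hx Hxy.
  destruct (inverse_nonneg_spec x Hx) as [Hx0 Hgx].
  destruct (inverse_nonneg_spec y ltac:(lra)) as [Hy0 Hgy].
  destruct (Rle_lt_dec (inverse_nonneg x) (inverse_nonneg y)) as [Hle | Hlt]; [exact Hle |].
  apply g_increasing in Hlt; lra.
Qed.

Lemma inverse_nonneg_pos y : 0 < y -> 0 < inverse_nonneg y.
Proof.
  intros Hy. destruct (inverse_nonneg_spec y ltac:(lra)) as [H0 Hg].
  destruct (Req_dec (inverse_nonneg y) 0) as [E | E]; [rewrite E, g_0 in Hg |]; lra.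
Qed.

Lemma inverse_nonneg_of_g u : 0 <= u -> inverse_nonneg (g u) = u.
Proof.
  intros Hu.
  assert (Hgu : 0 <= g u) by (rewrite <- g_0; now apply g_nondecreasing).
  destruct (inverse_nonneg_spec _ Hgu) as [H0 Hg].
  destruct (Rtotal_order (inverse_nonneg (g u)) u) as [Hlt | [Heq | Hgt]]; [| exact Heq |].
  - apply g_increasing in Hlt; lra.
  - apply g_increasing in Hgt; lra.
Qed.

Lemma ex_derive_inverse_nonneg (g' : R -> R) y :
  (forall x, is_derive g x (g' x)) -> 0 < y -> g' (inverse_nonneg y) <> 0 ->
  ex_derive inverse_nonneg y.
Proof.
  intros Hg' Hy Hnz. apply ex_derive_Reals_1.
  set (ub := inverse_nonneg y + 1).
  destruct (inverse_nonneg_spec y ltac:(lra)) as [H0 Hgy].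
  assert (Hub : 0 < ub) by (unfold ub; lra).
  assert (Hy_in : g 0 < y < g ub).
  { rewrite g_0. split; [exact Hy |]. rewrite <- Hgy at 1. apply g_increasing; unfold ub; lra. }
  assert (Hinv : forall x, g 0 <= x -> x <= g ub -> comp g inverse_nonneg x = id x).
  { intros x Hx _. rewrite g_0 in Hx. apply inverse_nonneg_spec, Hx. }
  assert (Hrange : forall x, g 0 <= x -> x <= g ub -> 0 <= inverse_nonneg x <= ub).
  { intros x Hx Hxub. rewrite g_0 in Hx. split; [apply inverse_nonneg_spec, Hx |].
    rewrite <- (inverse_nonneg_of_g ub) by lra. now apply inverse_nonneg_le. }
  assert (Hder : forall a, 0 <= a <= ub -> derivable_pt g a).
  { intros a _. apply ex_derive_Reals_0. eexists. apply Hg'. }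
  apply (derivable_pt_recip_interv g inverse_nonneg 0 ub y Hub Hy_in Hinv Hrange
           (fun x z Hx Hxz _ => g_increasing x z Hx Hxz) Hder).
  now rewrite (derive_pt_eq_0 _ _ _ _ (proj1 (is_derive_Reals _ _ _) (Hg' _))).
Qed.

End IncreasingInverse.

Lemma tanh_eq u : tanh u = 1 - 2 / (exp (2 * u) + 1).
Proof.
  unfold tanh, sinh, cosh.
  assert (He : exp (2 * u) = exp u * exp u) by (rewrite <- exp_plus; f_equal; ring).
  rewrite He, exp_Ropp. assert (Hp := exp_pos u).
  field. split; nra.
Qed.

Lemma tanh_increasing x y : x < y -> tanh x < tanh y.
Proof.
  intros Hxy. rewrite !tanh_eq.
  assert (Hx := exp_pos (2 * x)).
  assert (Hexp : exp (2 * x) < exp (2 * y)) by (apply exp_increasing; lra).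
  enough (2 / (exp (2 * y) + 1) < 2 / (exp (2 * x) + 1)) by lra.
  apply Rmult_lt_compat_l; [lra |]. apply Rinv_lt_contravar; nra.
Qed.

Lemma tanh_le x y : x <= y -> tanh x <= tanh y.
Proof.
  intros Hxy. destruct (Req_dec x y) as [-> | Hne]; [lra |].
  apply Rlt_le, tanh_increasing. lra.
Qed.

Lemma tanh_0 : tanh 0 = 0.
Proof. rewrite tanh_eq, Rmult_0_r, exp_0. field. Qed.

Lemma tanh_nonneg u : 0 <= u -> 0 <= tanh u.
Proof. intros Hu. rewrite <- tanh_0. now apply tanh_le. Qed.

Lemma tanh_pos u : 0 < u -> 0 < tanh u.
Proof. intros Hu. rewrite <- tanh_0. now apply tanh_increasing. Qed.

Lemma tanh_lt_1 u : tanh u < 1.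
Proof.
  rewrite tanh_eq. assert (Hp := exp_pos (2 * u)).
  enough (0 < 2 / (exp (2 * u) + 1)) by lra.
  apply Rdiv_lt_0_compat; lra.
Qed.

Lemma is_derive_tanh u : is_derive tanh u (1 - tanh u ^ 2).
Proof.
  apply (is_derive_ext (fun u => 1 - 2 / (exp (2 * u) + 1))); [intros; now rewrite tanh_eq |].
  rewrite tanh_eq. assert (Hp := exp_pos (2 * u)).
  auto_derive; [lra |]. field. lra.
Qed.

Lemma is_lim_tanh_p_infty : is_lim tanh p_infty 1.
Proof.
  apply (is_lim_ext (fun u => 1 - 2 / (exp (2 * u) + 1))); [intros; now rewrite tanh_eq |].
  assert (Hexp : is_lim (fun u => exp (2 * u) + 1) p_infty p_infty).
  { apply (is_lim_le_p_loc (fun u => u)); [| apply is_lim_id].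
    exists 0. intros u Hu. assert (H := exp_ineq1 (2 * u)). lra. }
  assert (Hfrac : is_lim (fun u => 2 / (exp (2 * u) + 1)) p_infty 0).
  { replace (Finite 0) with (Rbar_div 2 p_infty) by (simpl; f_equal; ring).
    apply is_lim_div; [apply is_lim_const | exact Hexp | easy | easy]. }
  replace (Finite 1) with (Finite (1 - 0)) by (f_equal; ring).
  apply is_lim_minus'; [apply is_lim_const | exact Hfrac].
Qed.

Definition utanh (u : R) : R := u * tanh u.

Lemma utanh_0 : utanh 0 = 0.
Proof. unfold utanh. ring. Qed.

Lemma utanh_increasing x y : 0 <= x -> x < y -> utanh x < utanh y.
Proof.
  intros Hx Hxy. unfold utanh.
  assert (Htxy := tanh_increasing x y Hxy).
  assert (Htx := tanh_nonneg x Hx).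
  nra.
Qed.

Lemma is_derive_utanh u : is_derive utanh u (tanh u + u * (1 - tanh u ^ 2)).
Proof.
  unfold utanh. evar (l : R).
  replace (tanh u + _) with l; [apply (is_derive_mult (fun u => u) tanh) |].
  - apply is_derive_id.
  - apply is_derive_tanh.
  - intros; apply Rmult_comm.
  - unfold l. simpl. unfold plus, mult, one. simpl. ring.
Qed.

Lemma utanh_continuous : continuity utanh.
Proof.
  intros x. apply derivable_continuous_pt, ex_derive_Reals_0.
  eexists. apply is_derive_utanh.
Qed.

Lemma utanh_le u : 0 <= u -> utanh u <= u.
Proof. intros Hu. unfold utanh. assert (H := tanh_lt_1 u). nra. Qed.

(* [u - u tanh u = 2u / (e^(2u) + 1) <= 1] because [1 + 2u <= e^(2u)]. *)
Lemma utanh_ge u : 0 <= u -> u - 1 <= utanh u.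
Proof.
  intros Hu. unfold utanh. rewrite tanh_eq.
  assert (He : 1 + 2 * u <= exp (2 * u)).
  { destruct (Req_dec u 0) as [-> | Hu0].
    - rewrite Rmult_0_r, exp_0. lra.
    - apply Rlt_le, exp_ineq1. lra. }
  enough (u * (2 / (exp (2 * u) + 1)) <= 1) by lra.
  unfold Rdiv. rewrite <- Rmult_assoc.
  apply (Rmult_le_reg_r (exp (2 * u) + 1)); [lra |].
  rewrite Rmult_assoc, Rinv_l by lra. lra.
Qed.

Lemma utanh_unbounded y : exists u, 0 <= u /\ y <= utanh u.
Proof.
  exists (Rmax 0 y + 1). assert (H0 := Rmax_l 0 y). assert (Hy := Rmax_r 0 y).
  split; [lra |]. assert (H := utanh_ge (Rmax 0 y + 1)). lra.
Qed.

Definition utanh_inv : R -> R := inverse_nonneg utanh.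

Lemma utanh_inv_spec y : 0 <= y -> 0 <= utanh_inv y /\ utanh (utanh_inv y) = y.
Proof. apply inverse_nonneg_spec; auto using utanh_0, utanh_continuous, utanh_unbounded. Qed.

Lemma utanh_inv_pos y : 0 < y -> 0 < utanh_inv y.
Proof. apply inverse_nonneg_pos; auto using utanh_0, utanh_continuous, utanh_unbounded. Qed.

Lemma utanh_inv_le x y : 0 <= x -> x <= y -> utanh_inv x <= utanh_inv y.
Proof.
  apply inverse_nonneg_le; auto using utanh_0, utanh_increasing, utanh_continuous, utanh_unbounded.
Qed.

Lemma utanh_inv_ge y : 0 <= y -> y <= utanh_inv y.
Proof.
  intros Hy. destruct (utanh_inv_spec y Hy) as [H0 Hinv].
  rewrite <- Hinv at 1. now apply utanh_le.
Qed.

Lemma is_lim_utanh_inv_p_infty : is_lim utanh_inv p_infty p_infty.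
Proof.
  apply (is_lim_le_p_loc (fun y => y)); [| apply is_lim_id].
  exists 0. intros y Hy. apply utanh_inv_ge. lra.
Qed.

Lemma ex_derive_utanh_inv y : 0 < y -> ex_derive utanh_inv y.
Proof.
  intros Hy.
  apply (ex_derive_inverse_nonneg utanh utanh_0 utanh_increasing utanh_continuous
           utanh_unbounded (fun u => tanh u + u * (1 - tanh u ^ 2)));
    [exact is_derive_utanh | exact Hy |].
  fold utanh_inv. assert (Hu := utanh_inv_pos y Hy).
  set (u := utanh_inv y) in *.
  assert (Ht0 := tanh_pos u Hu). assert (Ht1 := tanh_lt_1 u).
  assert (Hsech : 0 < 1 - tanh u ^ 2) by (simpl; nra).
  cbv beta. apply Rgt_not_eq, Rplus_lt_0_compat; [exact Ht0 | now apply Rmult_lt_0_compat].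
Qed.

Definition phi_tanh (alpha t : R) : R := alpha ^ 2 * tanh (utanh_inv (t / alpha)) ^ 2.

Lemma phi_eq_phi_tanh (f : R -> R) (alpha t : R) : is_f f -> 0 < alpha -> 0 < t ->
  phi f alpha t = phi_tanh alpha t.
Proof.
  intros [_ Hf] Ha Ht. assert (Hy : 0 < t / alpha) by (apply Rdiv_lt_0_compat; auto).
  destruct (utanh_inv_spec _ (Rlt_le _ _ Hy)) as [_ Hinv].
  assert (Hu := utanh_inv_pos _ Hy).
  unfold phi, phi_tanh. set (u := utanh_inv (t / alpha)) in *.
  assert (Ht' : t = alpha * utanh u) by (rewrite Hinv; field; lra).
  rewrite <- Hinv. unfold utanh. rewrite Hf by exact Hu.
  rewrite Ht'. unfold utanh. field. lra.
Qed.

Lemma ex_derive_phi_tanh alpha t : 0 < alpha -> 0 < t -> ex_derive (phi_tanh alpha) t.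
Proof.
  intros Ha Ht. unfold phi_tanh.
  assert (Hd := ex_derive_utanh_inv (t / alpha)).
  auto_derive. split; [| split; [| exact I]].
  - eexists; apply is_derive_tanh.
  - apply Hd. now apply Rdiv_lt_0_compat.
Qed.

Lemma phi_tanh_le alpha s t :
  0 < alpha -> 0 <= s -> s <= t -> phi_tanh alpha s <= phi_tanh alpha t.
Proof.
  intros Ha Hs Hst. unfold phi_tanh.
  assert (Hdiv : s / alpha <= t / alpha).
  { apply Rmult_le_compat_r; [apply Rlt_le, Rinv_0_lt_compat |]; lra. }
  assert (Hs' : 0 <= s / alpha) by (apply Rmult_le_pos; [| apply Rlt_le, Rinv_0_lt_compat]; lra).
  apply Rmult_le_compat_l; [apply pow2_ge_0 |]. apply pow_incr. split.
  - apply tanh_nonneg, utanh_inv_spec, Hs'.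
  - apply tanh_le, utanh_inv_le; assumption.
Qed.

Lemma is_lim_phi_tanh_p_infty alpha :
  0 < alpha -> is_lim (phi_tanh alpha) p_infty (alpha ^ 2).
Proof.
  intros Ha. unfold phi_tanh.
  assert (Hdiv : is_lim (fun t => t / alpha) p_infty p_infty).
  { replace p_infty with (Rbar_mult p_infty (/ alpha)) at 2; [apply is_lim_scal_r, is_lim_id |].
    apply is_Rbar_mult_unique, is_Rbar_mult_p_infty_pos. simpl. now apply Rinv_0_lt_compat. }
  assert (Hinv : is_lim (fun t => utanh_inv (t / alpha)) p_infty p_infty).
  { apply (is_lim_comp _ _ p_infty p_infty p_infty is_lim_utanh_inv_p_infty Hdiv). now exists 0. }
  assert (Htanh : is_lim (fun t => tanh (utanh_inv (t / alpha))) p_infty 1).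
  { apply (is_lim_comp _ _ p_infty 1 p_infty is_lim_tanh_p_infty Hinv). now exists 0. }
  replace (Finite (alpha ^ 2)) with (Finite (alpha ^ 2 * 1 ^ 2)) by (f_equal; ring).
  apply (is_lim_comp_continuous _ (fun x => alpha ^ 2 * x ^ 2) _ _ Htanh).
  apply (ex_derive_continuous (fun x => alpha ^ 2 * x ^ 2)). auto_derive. exact I.
Qed.

Theorem proposition3p5 (f : R -> R) (Hf : is_f f) (alpha : R) (Ha : 0 < alpha) :
  (forall t : R, 0 < t -> ex_derive (phi f alpha) t) /\
  (forall s t : R, 0 < s -> s <= t -> phi f alpha s <= phi f alpha t) /\
  is_lim (phi f alpha) p_infty (alpha ^ 2).
Proof.
  assert (Heq : forall t, 0 < t -> phi_tanh alpha t = phi f alpha t).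
  { intros t Ht. symmetry. now apply phi_eq_phi_tanh. }
  split; [| split].
  - intros t Ht. apply (ex_derive_ext_loc (phi_tanh alpha)).
    + apply (filter_imp (fun y => 0 < y)); [exact Heq | now apply open_gt].
    + now apply ex_derive_phi_tanh.
  - intros s t Hs Hst. rewrite <- !Heq by lra. apply phi_tanh_le; lra.
  - apply (is_lim_ext_loc (phi_tanh alpha)); [now exists 0 |].
    now apply is_lim_phi_tanh_p_infty.
Qed.
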